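(* Let $\mathcal C:\{0,1\}^+\to\{0,1\}^+$ be a compressor, let $n\ge 1$ be known, and let $S\in\{0,1\}^n$ be an unknown binary string of length $n$ that can only be accessed through a substring oracle. Then there is an (adaptive) algorithm that reconstructs $S$ using $O(|\mathcal C(S)|)$ substring queries to the oracle.
   Context: A compressor is an injective computable function $\mathcal C:\{0,1\}^+\to\{0,1\}^+$ whose inverse $\mathcal C^{-1}$ (the decompressor, with $\mathcal C^{-1}(\mathcal C(S))=S$) is also computable; $|\mathcal C(S)|$ denotes the length in bits of $\mathcal C(S)$. A substring oracle knows the hidden string $S$ and answers queries of the form ''Is $s$ a substring of $S$?'' with yes/no. An adaptive algorithm may choose each query depending on the answers to previous queries. Reconstructing $S$ means determining $S$ exactly. No bound on running time is claimed. *)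

From mathcomp Require Import all_boot.
Set Implicit Arguments. Unset Strict Implicit. Unset Printing Implicit Defensive.

(* Binary strings are [seq bool]; "s is a substring of S" is [infix s S]
   (contiguous occurrence), as in mathcomp's seq.v. *)

(* A compressor: an injective function on nonempty binary strings into
   nonempty binary strings, with a decompressor inverting it.  Both are
   Rocq functions, hence computable. *)
Definition compressor (C D : seq bool -> seq bool) : Prop :=
  (forall s, 0 < size s -> 0 < size (C s)) /\
  (forall s, 0 < size s -> D (C s) = s).

(* An adaptive substring-query algorithm (for a fixed input length) is a
   finite decision tree: at an internal node it asks "is q a substring of S?"
   and branches on the answer; at a leaf it outputs its guess for S. *)
Inductive qtree : Type :=
  | Leaf of seq bool
  | Query of seq bool & qtree & qtree.

Fixpoint run (t : qtree) (S : seq bool) : seq bool :=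
  match t with
  | Leaf s => s
  | Query q ty tn => if infix q S then run ty S else run tn S
  end.

Fixpoint nqueries (t : qtree) (S : seq bool) : nat :=
  match t with
  | Leaf _ => 0
  | Query q ty tn => (if infix q S then nqueries ty S else nqueries tn S).+1
  end.

From mathcomp Require Import all_boot zify.
Set Implicit Arguments. Unset Strict Implicit. Unset Printing Implicit Defensive.

(* Let K_j be the words of length n whose code has at most 2 ^ j bits; as C is
   injective, |K_j| < 2 ^ (2 ^ j + 1).  In any set K of at least two words of
   length n some word q is balanced: it occurs in between 1/6 and 5/6 of them.
   Indeed, extend q, starting from the empty word, by one letter at either end
   as long as it occurs in more than 5/6 of K: a word containing q is q itself
   or contains one of the four one-letter extensions of q, so one of these
   still occurs in at least 1/6 of K.  Each balanced query keeps at most 5/6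
   of the candidates, so O(2 ^ j) queries find S in K_j or rule K_j out.
   Trying j = 0, 1, 2, ... in turn stops at the least j with |C(S)| <= 2 ^ j,
   after O(2 ^ j) = O(|C(S)|) queries in total. *)

Definition words n : seq (seq bool) := map val (enum {: n.-tuple bool}).

Lemma mem_words n s : (s \in words n) = (size s == n).
Proof.
apply/mapP/eqP => [[t _ ->]|<-]; first exact: size_tuple.
by exists (in_tuple s); rewrite ?mem_enum.
Qed.

Lemma words_uniq n : uniq (words n).
Proof. by rewrite map_inj_uniq ?enum_uniq //; apply: val_inj. Qed.

Lemma size_words n : size (words n) = 2 ^ n.
Proof. by rewrite size_map -cardE card_tuple card_bool. Qed.

Fixpoint words_upto m : seq (seq bool) :=
  words m ++ (if m is m'.+1 then words_upto m' else [::]).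

Lemma mem_words_upto m s : (s \in words_upto m) = (size s <= m).
Proof.
elim: m => [|m IH] /=; rewrite mem_cat mem_words; first by rewrite orbF leqn0.
by rewrite IH [RHS]leq_eqVlt.
Qed.

Lemma size_words_upto m : size (words_upto m) < 2 ^ m.+1.
Proof.
elim: m => [|m IH] /=; first by rewrite cats0 size_words.
by rewrite size_cat size_words (expnS 2 m.+1); lia.
Qed.

Lemma infix_eq_size (T : eqType) (s t : seq T) : size s = size t -> infix s t = (s == t).
Proof.
move=> eq_st; apply/idP/eqP => [/infixP[a [b def_t]]|->]; last exact: infix_refl.
have /andP[/nilP a0 /nilP b0] : (size a == 0) && (size b == 0).
  by move: (congr1 size def_t); rewrite !size_cat eq_st; lia.
by rewrite def_t a0 b0 cats0.
Qed.

Lemma count_predU_le (T : Type) (a1 a2 : pred T) s :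
  count (predU a1 a2) s <= count a1 s + count a2 s.
Proof. by rewrite -count_predUI leq_addr. Qed.

Lemma count_has_le (T U : Type) (P : U -> pred T) (es : seq U) (s : seq T) :
  count (fun x => has (P^~ x) es) s <= \sum_(e <- es) count (P e) s.
Proof.
elim: es => [|e es IH]; first by rewrite big_nil count_pred0.
by rewrite big_cons (leq_trans (count_predU_le _ _ _)) ?leq_add2l.
Qed.

Definition extensions (q : seq bool) : seq (seq bool) :=
  [:: rcons q false; rcons q true; false :: q; true :: q].

Lemma infix_extensions (q t : seq bool) :
  infix q t -> t = q \/ has (fun e => infix e t) (extensions q).
Proof.
move=> /infixP[a [[|x b] ->]]; last first.
  have -> : a ++ q ++ x :: b = a ++ rcons q x ++ b by rewrite -cats1 -!catA.
  by right; case: x; rewrite /= infix_infix ?orbT.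
case/lastP: a => [|a y]; first by left; rewrite cats0.
by right; rewrite cat_rcons; case: y; rewrite /= infix_infix ?orbT.
Qed.

Definition occ (K : seq (seq bool)) (q : seq bool) : nat := count (infix q) K.

Lemma occ_extensions (K : seq (seq bool)) q : uniq K ->
  occ K q <= \sum_(e <- extensions q) occ K e + 1.
Proof.
move=> uniqK; rewrite /occ.
have infix_q_ext : subpred (infix q)
    (predU (pred1 q) (fun t => has (fun e => infix e t) (extensions q))).
  by move=> t /infix_extensions[->|ext]; apply/orP; [left; rewrite /= eqxx | right].
apply: leq_trans (sub_count infix_q_ext K) _.
apply: leq_trans (count_predU_le _ _ _) _.
by rewrite addnC leq_add ?count_has_le // count_uniq_mem ?leq_b1.
Qed.

Lemma occ_nil (K : seq (seq bool)) : occ K [::] = size K.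
Proof. by rewrite /occ (@eq_count _ _ predT (@infix0s _)) count_predT. Qed.

Definition balanced (K : seq (seq bool)) q := size K <= 6 * occ K q <= 5 * size K.

Lemma heavy_extension (K : seq (seq bool)) q : uniq K -> 1 < size K ->
  5 * size K < 6 * occ K q ->
  exists2 e : seq bool, e \in extensions q & size K <= 6 * occ K e.
Proof.
move=> uniqK K_gt1 heavy_q; apply/hasP; apply: contraTT heavy_q.
rewrite -all_predC /= !andbT -!ltnNge => /and4P[h1 h2 h3 h4].
have := occ_extensions q uniqK; rewrite !big_cons big_nil; lia.
Qed.

Lemma exists_balanced n (K : seq (seq bool)) :
  uniq K -> {in K, forall t, size t = n} -> 1 < size K ->
  exists2 q, size q <= n & balanced K q.
Proof.
move=> uniqK sizeK K_gt1.
have size_occurring q : 0 < occ K q -> size q <= n.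
  by rewrite /occ -has_count => /hasP[t /sizeK <- /size_infix].
suff grow d q : n - size q < d -> 5 * size K < 6 * occ K q ->
    exists2 q', size q' <= n & balanced K q'.
  by apply: (grow n.+1 [::]); rewrite ?subn0 // occ_nil; lia.
elim: d q => // d IH q lt_d heavy_q.
have [e ext_e light_e] := heavy_extension uniqK K_gt1 heavy_q.
have size_e : size e = (size q).+1.
  by move: ext_e; rewrite !inE => /or4P[] /eqP->; rewrite ?size_rcons.
have e_n : size e <= n by apply: size_occurring; lia.
have [heavy_e|not_heavy_e] := ltnP (5 * size K) (6 * occ K e).
  by apply: (IH e) => //; lia.
by exists e; rewrite // /balanced light_e.
Qed.

Definition balanced_query n K : seq bool :=
  nth [::] (words_upto n) (find (balanced K) (words_upto n)).

Lemma balanced_queryP n (K : seq (seq bool)) :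
  uniq K -> {in K, forall t, size t = n} -> 1 < size K -> balanced K (balanced_query n K).
Proof.
move=> uniqK sizeK K_gt1; apply: nth_find.
have [q q_n bal_q] := exists_balanced uniqK sizeK K_gt1.
by apply/hasP; exists q; rewrite ?mem_words_upto.
Qed.

Definition check_each (K : seq (seq bool)) (next : qtree) : qtree :=
  foldr (fun t u => Query t (Leaf t) u) next K.

Lemma check_eachP (K : seq (seq bool)) next S : {in K, forall t, size t = size S} ->
  run (check_each K next) S = (if S \in K then S else run next S) /\
  nqueries (check_each K next) S <= size K + (if S \in K then 0 else nqueries next S).
Proof.
elim: K => [|t K IH] sizeK //=.
have [|run_K cost_K] := IH; first by move=> u uK; apply: sizeK; rewrite inE uK orbT.
have size_t : size t = size S by apply: sizeK; rewrite mem_head.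
rewrite infix_eq_size // inE.
by have [->|_] := eqVneq t S; split => //=; lia.
Qed.

Definition side (K : seq (seq bool)) q b := [seq t <- K | infix q t == b].

Lemma budget_split a N c : 6 * a <= 5 * N -> N * 5 ^ c.+1 <= 6 ^ c.+1 -> a * 5 ^ c <= 6 ^ c.
Proof. by rewrite !expnS; nia. Qed.

Lemma size_side (K : seq (seq bool)) q b :
  size (side K q b) = if b then occ K q else size K - occ K q.
Proof.
rewrite size_filter; case: b; first by apply: eq_count => t; rewrite eqb_id.
by rewrite -(count_predC (infix q) K) addKn; apply: eq_count => t; rewrite eqbF_neg.
Qed.

Lemma size_side_budget (K : seq (seq bool)) q b c : balanced K q ->
  size K * 5 ^ c.+1 <= 6 ^ c.+1 -> size (side K q b) * 5 ^ c <= 6 ^ c.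
Proof. by move=> /andP[lo hi]; apply: budget_split; rewrite size_side; case: b; lia. Qed.

Fixpoint bisect n c K next : qtree :=
  if c is c'.+1 then
    if 1 < size K then
      let q := balanced_query n K in
      Query q (bisect n c' (side K q true) next) (bisect n c' (side K q false) next)
    else check_each K next
  else check_each K next.

(* [size K * 5 ^ c <= 6 ^ c]: as each balanced query keeps at most 5/6 of the
   candidates, [c] queries leave at most one. *)
Lemma bisectP c K next S : uniq K -> {in K, forall t, size t = size S} ->
  size K * 5 ^ c <= 6 ^ c ->
  run (bisect (size S) c K next) S = (if S \in K then S else run next S) /\
  nqueries (bisect (size S) c K next) S <= c.+1 + (if S \in K then 0 else nqueries next S).
Proof.
elim: c K => [|c IH] K uniqK sizeK budget /=.
  have [-> cost] := check_eachP next sizeK.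
  by rewrite !expn0 muln1 in budget; split => //; rewrite (leq_trans cost) // leq_add2r.
case: ifP => [K_gt1|/negbT]; last first.
  rewrite -leqNgt => K_le1; have [-> cost] := check_eachP next sizeK.
  by split => //; rewrite (leq_trans cost) // leq_add2r (leq_trans K_le1).
set q := balanced_query _ K.
have sub_side b : {subset side K q b <= K} by apply: mem_subseq; apply: filter_subseq.
have [] := IH (side K q (infix q S)) (filter_uniq _ uniqK)
  (sub_in1 (sub_side _) sizeK) (size_side_budget _ (balanced_queryP uniqK sizeK K_gt1) budget).
rewrite mem_filter eqxx /=.
by case: (infix q S) => -> cost; split => //; lia.
Qed.

Lemma compressor_inj C D : compressor C D -> {in [pred s | 0 < size s] &, injective C}.
Proof. by move=> [_ CK] s t s_gt0 t_gt0 eqC; rewrite -(CK s) // eqC CK. Qed.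

Definition level (C : seq bool -> seq bool) n j : seq (seq bool) :=
  [seq t <- words n | size (C t) <= 2 ^ j].

Lemma mem_level C n j s : (s \in level C n j) = (size s == n) && (size (C s) <= 2 ^ j).
Proof. by rewrite mem_filter mem_words andbC. Qed.

Lemma size_level C D n j : compressor C D -> 0 < n -> size (level C n j) < 2 ^ (2 ^ j).+1.
Proof.
move=> compC n_gt0; rewrite -(size_map C); apply: leq_trans (size_words_upto _).
apply: uniq_leq_size.
  rewrite map_inj_in_uniq ?filter_uniq ?words_uniq //.
  by apply: sub_in2 (compressor_inj compC) => s; rewrite mem_level inE => /andP[/eqP-> _].
by move=> z /mapP[s]; rewrite mem_level => /andP[_ CS_j] ->; rewrite mem_words_upto.
Qed.

(* [2 * 5 ^ 4 <= 6 ^ 4]: four balanced queries at least halve the candidates. *)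
Lemma budget_pow2 m : 2 ^ m * 5 ^ (4 * m) <= 6 ^ (4 * m).
Proof. by case: m => // m; rewrite !expnM -expnMn leq_exp2r. Qed.

Lemma level_budget C D n j : compressor C D -> 0 < n ->
  size (level C n j) * 5 ^ (4 * (2 ^ j).+1) <= 6 ^ (4 * (2 ^ j).+1).
Proof.
move=> compC n_gt0; apply: leq_trans (budget_pow2 _).
by rewrite leq_mul2r ltnW ?(size_level j compC) ?orbT.
Qed.

Definition level_search C n j next : qtree :=
  bisect n (4 * (2 ^ j).+1) (level C n j) next.

Lemma level_searchP C D S j next : compressor C D -> 0 < size S ->
  run (level_search C (size S) j next) S = (if size (C S) <= 2 ^ j then S else run next S) /\
  nqueries (level_search C (size S) j next) S
    <= 9 * 2 ^ j + (if size (C S) <= 2 ^ j then 0 else nqueries next S).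
Proof.
move=> compC S_gt0.
have sizeK : {in level C (size S) j, forall t, size t = size S}.
  by move=> t; rewrite mem_level => /andP[/eqP].
have [] := bisectP next (filter_uniq _ (words_uniq _)) sizeK (level_budget j compC S_gt0).
rewrite mem_level eqxx /= => -> cost; split => //; apply: leq_trans cost _.
have : 0 < 2 ^ j by rewrite expn_gt0.
by rewrite leq_add2r; lia.
Qed.

Fixpoint cascade C n j f : qtree :=
  level_search C n j (if f is f'.+1 then cascade C n j.+1 f' else Leaf [::]).

Lemma cascadeP C D S f j k : compressor C D -> 0 < size S ->
  j <= k -> k <= j + f -> size (C S) <= 2 ^ k ->
  run (cascade C (size S) j f) S = S /\
  nqueries (cascade C (size S) j f) S <= 9 * (2 ^ k.+1 - 2 ^ j).
Proof.
move=> compC S_gt0; elim: f j => [|f IH] j j_k k_f CS_k /=;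
  set rest := (X in level_search _ _ _ X);
  have [-> cost] := level_searchP j rest compC S_gt0;
  have pow_jk : 2 ^ j <= 2 ^ k by rewrite leq_exp2l.
all: have pow_k1 : 2 ^ k.+1 = 2 * 2 ^ k by rewrite expnS.
all: case: ifP cost => [_ cost | CS_j cost]; first by split => //; lia.
  have k_j : k = j by lia.
  by rewrite -k_j CS_k in CS_j.
have j_lt_k : j < k by rewrite -(ltn_exp2l _ _ (ltnSn 1)) (leq_trans _ CS_k) // ltnNge CS_j.
have [] := IH j.+1 j_lt_k _ CS_k; first by lia.
move=> run_rest cost_rest.
rewrite -/rest in run_rest cost_rest.
have pow_j1 : 2 ^ j.+1 = 2 * 2 ^ j by rewrite expnS.
have pow_jk1 : 2 ^ j.+1 <= 2 ^ k.+1 by rewrite leq_exp2l.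
by split => //; lia.
Qed.

Lemma expn_up_log2_lt L : 0 < L -> 2 ^ up_log 2 L < 2 * L.
Proof.
move=> L_gt0; have [L_le1|L_gt1] := leqP L 1.
  by have -> : L = 1 by lia.
have := up_log_bounds (ltnSn 1) L_gt1; have := up_log_gt0 2 L; rewrite L_gt1 /=.
by case: (up_log 2 L) => // k _ /andP[lt_L _]; rewrite expnS ltn_pmul2l.
Qed.

Theorem lemma2 (C D : seq bool -> seq bool) (hC : compressor C D) :
  exists c : nat, exists A : nat -> qtree,
    forall n : nat, 0 < n ->
    forall S : seq bool, size S = n ->
      run (A n) S = S /\ nqueries (A n) S <= c * size (C S).
Proof.
exists 36, (fun n => cascade C n 0 (\max_(t <- words n) size (C t))).
move=> n n_gt0 S size_S; subst n.
set L := size (C S).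
have L_gt0 : 0 < L by apply: hC.1.
have L_le : L <= 2 ^ up_log 2 L by apply: up_logP.
have up_log_le : up_log 2 L <= \max_(t <- words (size S)) size (C t).
  apply: up_log_min => //; apply: leq_trans (ltnW (ltn_expl _ (ltnSn 1))).
  by apply: leq_bigmax_seq; rewrite ?mem_words.
have [-> cost] := cascadeP (j := 0) hC n_gt0 (leq0n _) up_log_le L_le.
by split => //; move: cost (expn_up_log2_lt L_gt0); rewrite expnS; lia.
Qed.
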